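(* Let $k_{\mathcal{A}},k_{\mathcal{W}},k_{\mathcal{Y}}$ be bounded positive semidefinite kernels on $\mathcal{A},\mathcal{W},\mathcal{Y}$ with RKHSs $\mathcal{H}_{\mathcal{A}},\mathcal{H}_{\mathcal{W}},\mathcal{H}_{\mathcal{Y}}$ and canonical features $\phi_{\mathcal{A}},\phi_{\mathcal{W}},\phi_{\mathcal{Y}}$. Let $\mathcal{H}_{\mathcal{A}\mathcal{W}}$ and $\mathcal{H}_{\mathcal{A}\mathcal{Y}}$ be the tensor-product RKHSs with features $\phi_{\mathcal{A}}(a)\otimes\phi_{\mathcal{W}}(w)$ and $\phi_{\mathcal{A}\mathcal{Y}}(a,y)=\phi_{\mathcal{A}}(a)\otimes\phi_{\mathcal{Y}}(y)$, and let $\mathcal{H}_{\mathcal{W}(\mathcal{A}\mathcal{Y})}$ be the space of Hilbert–Schmidt operators $\mathcal{H}_{\mathcal{A}\mathcal{Y}}\to\mathcal{H}_{\mathcal{W}}$. Given stage 1 samples $\{(w_i,a_i,y_i)\}_{i=1}^n$, stage 2 samples $\{(\dot a_i,\dot y_i)\}_{i=1}^m$ and regularization parameters $\lambda,\eta>0$, define $$\hat C_{W|A,Y}=\arg\min_{C\in\mathcal{H}_{\mathcal{W}(\mathcal{A}\mathcal{Y})}}\frac1n\sum_{i=1}^n\|\phi_{\mathcal{W}}(w_i)-C\,\phi_{\mathcal{A}\mathcal{Y}}(a_i,y_i)\|^2_{\mathcal{H}_{\mathcal{W}}}+\lambda\|C\|^2_{\mathcal{H}_{\mathcal{W}(\mathcal{A}\mathcal{Y})}},$$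 $$\hat h=\arg\min_{h\in\mathcal{H}_{\mathcal{A}\mathcal{W}}}\frac1m\sum_{i=1}^m\Big(\dot y_i-\big\langle h,\ \phi_{\mathcal{A}}(\dot a_i)\otimes\hat C_{W|A,Y}\phi_{\mathcal{A}\mathcal{Y}}(\dot a_i,\dot y_i)\big\rangle_{\mathcal{H}_{\mathcal{A}\mathcal{W}}}\Big)^2+\eta\|h\|^2_{\mathcal{H}_{\mathcal{A}\mathcal{W}}}.$$ Then $$\hat h(a,w)=\vec\alpha^\top\vec k(a,w),\qquad \vec\alpha=(M+m\eta I)^{-1}\dot{\vec y},$$ where $\dot{\vec y}=(\dot y_1,\dots,\dot y_m)^\top\in\mathbb{R}^m$, $$M=K_{\dot A\dot A}\odot(B^\top K_{WW}B)\in\mathbb{R}^{m\times m},\quad \vec k(a,w)=\vec k_{\dot A}(a)\odot(B^\top\vec k_W(w))\in\mathbb{R}^m,\quad B=(K_{AA}\odot K_{YY}+n\lambda I)^{-1}(K_{A\dot A}\odot K_{Y\dot Y})\in\mathbb{R}^{n\times m}.$$ Here $K_{AA},K_{WW},K_{YY}\in\mathbb{R}^{n\times n}$ are the stage 1 kernel matrices (e.g. $(K_{AA})_{ij}=k_{\mathcal{A}}(a_i,a_j)$), $K_{\dot A\dot A}=(k_{\mathcal{A}}(\dot a_i,\dot a_j))_{ij}\in\mathbb{R}^{m\times m}$, $K_{A\dot A}=(k_{\mathcal{A}}(a_i,\dot a_j))_{ij}$, $K_{Y\dot Y}=(k_{\mathcal{Y}}(y_i,\dot y_j))_{ij}\in\mathbb{R}^{n\times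 m}$, $\vec k_{\dot A}(a)=(k_{\mathcal{A}}(\dot a_i,a))_{i=1}^m\in\mathbb{R}^m$, and $\vec k_W(w)=(k_{\mathcal{W}}(w_i,w))_{i=1}^n\in\mathbb{R}^n$.
   Context: $\odot$ denotes the entrywise (Hadamard) product; $\otimes$ the tensor product of RKHS elements. *)

From HB Require Import structures.
From mathcomp Require Import all_boot all_order all_algebra.
From mathcomp Require Import reals.
Set Implicit Arguments. Unset Strict Implicit. Unset Printing Implicit Defensive.
Import Order.TTheory GRing.Theory Num.Theory.
Local Open Scope ring_scope.

HB.mixin Record Lmodule_hasInner (R : realType) V of GRing.Lmodule R V := {
  inner : V -> V -> R;
  innerC : forall x y, inner x y = inner y x;
  innerDl : forall x y z, inner (x + y) z = inner x z + inner y z;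
  innerZl : forall (c : R) x y, inner (c *: x) y = c * inner x y;
  inner_ge0 : forall x, 0 <= inner x x;
  inner_eq0 : forall x, inner x x = 0 -> x = 0 }.

#[short(type="preHilbertType")]
HB.structure Definition PreHilbert (R : realType) :=
  { V of Lmodule_hasInner R V & GRing.Lmodule R V }.

Section Defs.
Context {R : realType}.

Definition nsq {V : preHilbertType R} (x : V) : R := inner x x.

Definition hilbert_complete (V : preHilbertType R) : Prop :=
  forall u : nat -> V,
    (forall e : R, 0 < e -> exists N : nat, forall p q : nat,
        (N <= p)%N -> (N <= q)%N -> nsq (u p - u q) < e) ->
    exists l : V, forall e : R, 0 < e -> exists N : nat, forall p : nat,
        (N <= p)%N -> nsq (u p - l) < e.

Definition dense_span (V : preHilbertType R) (S : V -> Prop) : Prop :=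
  forall (x : V) (e : R), 0 < e ->
    exists (k : nat) (c : 'I_k -> R) (s : 'I_k -> V),
      (forall i, S (s i)) /\ nsq (x - \sum_(i < k) c i *: s i) < e.

(* k is a bounded kernel whose RKHS is (isometrically) the Hilbert space H
   with canonical feature map phi: H complete, span of features dense,
   and k x x' = <phi x, phi x'> (reproducing property). *)
Definition rkhs_of (X : Type) (k : X -> X -> R) (H : preHilbertType R)
    (phi : X -> H) : Prop :=
  [/\ hilbert_complete H,
      dense_span (fun h => exists x, h = phi x),
      (forall x x', k x x' = inner (phi x) (phi x')) &
      (exists c : R, forall x, k x x <= c)].

Definition is_tensor_product (H1 H2 T : preHilbertType R)
    (t : H1 -> H2 -> T) : Prop :=
  [/\ hilbert_complete T,
      dense_span (fun z => exists x y, z = t x y) &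
      (forall x x' y y', inner (t x y) (t x' y') = inner x x' * inner y y')].

(* S with app is the Hilbert space of Hilbert-Schmidt operators H1 -> H2:
   S is the Hilbert tensor product H2 (x) H1 via the rank-one operators
   rk w v = (u |-> <v,u> w), app C is the action of C, and
   <C v, w> = <C, rk w v>_HS. *)
Definition is_HS_space (H1 H2 S : preHilbertType R)
    (rk : H2 -> H1 -> S) (app : S -> H1 -> H2) : Prop :=
  [/\ is_tensor_product rk,
      (forall w v u, app (rk w v) u = inner v u *: w) &
      (forall C v w, inner (app C v) w = inner C (rk w v))].

Definition hadamard (p q : nat) (X Y : 'M[R]_(p, q)) : 'M[R]_(p, q) :=
  \matrix_(i, j) (X i j * Y i j).

End Defs.

From HB Require Import structures.
From mathcomp Require Import all_boot all_order all_algebra.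
From mathcomp Require Import reals.
From mathcomp Require Import ring lra.
Set Implicit Arguments.
Unset Strict Implicit.
Unset Printing Implicit Defensive.
Import Order.TTheory GRing.Theory Num.Theory.
Local Open Scope ring_scope.

(* Both stages are ridge regressions, minimised by the representer-theorem
   candidates built from the regularised inverse Gram matrix: the normal
   equations cancel the cross term in the expansion of the objective at
   candidate + d, which therefore exceeds the minimum by at least the penalty
   weight times |d|^2.  In stage 1 the candidate operator is
   [sum_j g_j (x) x_j] with [g = (K + n lam)^-1 phi_W], so at the stage-2
   points it returns the combinations of the [phi_W (w_l)] with coefficient
   matrix [B].  Stage 2 is then scalar ridge regression on the features
   [z_k = phi_A (ad_k) (x) C phi_AY (ad_k, yd_k)]; since inner products of
   elementary tensors factor, their Gram matrix is [M] and their inner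
   products with [phi_A a (x) phi_W w] form [k(a, w)]. *)

Section PreHilbert.
Context {R : realType} {V : preHilbertType R}.
Implicit Types x y z : V.

Lemma inner0l y : inner (0 : V) y = 0.
Proof. by have := innerZl 0 (0 : V) y; rewrite scale0r mul0r. Qed.

Lemma innerNl x y : inner (- x) y = - inner x y.
Proof. by rewrite -scaleN1r innerZl mulN1r. Qed.

Lemma innerBl x y z : inner (x - y) z = inner x z - inner y z.
Proof. by rewrite innerDl innerNl. Qed.

Lemma innerDr x y z : inner x (y + z) = inner x y + inner x z.
Proof. by rewrite innerC innerDl !(innerC x). Qed.

Lemma innerNr x y : inner x (- y) = - inner x y.
Proof. by rewrite innerC innerNl innerC. Qed.

Lemma inner_suml (I : Type) (r : seq I) (P : pred I) (F : I -> V) y :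
  inner (\sum_(i <- r | P i) F i) y = \sum_(i <- r | P i) inner (F i) y.
Proof. exact: (big_morph (inner^~ y) (fun a b => innerDl a b y) (inner0l y)). Qed.

Lemma inner_extl x y : (forall z, inner x z = inner y z) -> x = y.
Proof.
by move=> xy; apply/subr0_eq/inner_eq0; rewrite innerBl xy subrr.
Qed.

Lemma nsq_ge0 x : 0 <= nsq x.
Proof. exact: inner_ge0. Qed.

Lemma nsqD x y : nsq (x + y) = nsq x + 2 * inner x y + nsq y.
Proof. by rewrite /nsq innerDl !innerDr (innerC y x); ring. Qed.

Lemma nsqB x y : nsq (x - y) = nsq x - 2 * inner x y + nsq y.
Proof. by rewrite nsqD /nsq !innerNr innerNl opprK mulrN. Qed.

Lemma quadratic_growth_argmin (f : V -> R) (v : V) (c : R) : 0 < c ->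
  (forall d, f v + c * nsq d <= f (v + d)) ->
  (forall u, f v <= f u) /\ (forall u, (forall u', f u <= f u') -> u = v).
Proof.
move=> c_gt0 growth.
have growth' u : f v + c * nsq (u - v) <= f u by rewrite -{2}(subrKC v u).
split=> [u | u u_min]; first by have := nsq_ge0 (u - v); have := growth' u; nra.
apply/subr0_eq/inner_eq0/eqP; rewrite -/(nsq _) eq_le nsq_ge0 andbT.
by have := growth' u; have := u_min v; nra.
Qed.

End PreHilbert.

Section Gram.
Context {R : realType} {V : preHilbertType R}.

Definition cross_gram n m (u : 'I_n -> V) (v : 'I_m -> V) : 'M[R]_(n, m) :=
  \matrix_(i, j) inner (u i) (v j).

Definition lincomb n m (B : 'M[R]_(n, m)) (u : 'I_n -> V) (k : 'I_m) : V :=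
  \sum_(l < n) B l k *: u l.

Lemma tr_cross_gram n m (u : 'I_n -> V) (v : 'I_m -> V) :
  (cross_gram u v)^T = cross_gram v u.
Proof. by apply/matrixP => i j; rewrite !mxE innerC. Qed.

Lemma cross_gram_lincombl n m p (B : 'M_(n, m)) (u : 'I_n -> V) (v : 'I_p -> V) :
  cross_gram (lincomb B u) v = B^T *m cross_gram u v.
Proof.
apply/matrixP => i j; rewrite !mxE inner_suml.
by apply: eq_bigr => l _; rewrite innerZl !mxE.
Qed.

Lemma cross_gram_lincombr n m p (u : 'I_p -> V) (B : 'M_(n, m)) (v : 'I_n -> V) :
  cross_gram u (lincomb B v) = cross_gram u v *m B.
Proof.
by rewrite -[LHS]trmxK tr_cross_gram cross_gram_lincombl trmx_mul trmxK tr_cross_gram.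
Qed.

Lemma lincomb_mulmx n m p (A : 'M_(n, m)) (B : 'M_(m, p)) (u : 'I_n -> V) k :
  lincomb B (lincomb A u) k = lincomb (A *m B) u k.
Proof.
rewrite /lincomb; under eq_bigr do rewrite scaler_sumr.
rewrite exchange_big; apply: eq_bigr => l _.
by rewrite mxE scaler_suml; apply: eq_bigr => j _; rewrite scalerA mulrC.
Qed.

Lemma lincombD n m (A B : 'M_(n, m)) (u : 'I_n -> V) k :
  lincomb (A + B) u k = lincomb A u k + lincomb B u k.
Proof. by rewrite /lincomb -big_split; apply: eq_bigr => l _; rewrite mxE scalerDl. Qed.

Lemma lincombZ n m (c : R) (A : 'M_(n, m)) (u : 'I_n -> V) k :
  lincomb (c *: A) u k = c *: lincomb A u k.
Proof. by rewrite /lincomb scaler_sumr; apply: eq_bigr => l _; rewrite mxE scalerA. Qed.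

Lemma lincomb1 n (u : 'I_n -> V) k : lincomb 1%:M u k = u k.
Proof.
rewrite /lincomb (bigD1 k) //= big1 => [|l /negbTE lk]; last by rewrite mxE lk scale0r.
by rewrite mxE eqxx scale1r addr0.
Qed.

Lemma gram_add_scalar_unitmx n (u : 'I_n -> V) (c : R) :
  ((0 < n)%N -> 0 < c) -> cross_gram u u + c%:M \in unitmx.
Proof.
case: n u => [|n] u c_gt0; first by rewrite unitmxE det_mx00 unitr1.
rewrite -row_free_unit -kermx_eq0; apply/eqP/row_matrixP => i; rewrite row0.
set r := row i _.
have r_ker : r *m (cross_gram u u + c%:M) = 0 by rewrite -row_mul mulmx_ker row0.
(* [r (G + c) r^T] is [|sum_j r_j u_j|^2 + c |r|^2], which vanishes only at [r = 0]. *)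
have form : nsq (lincomb r^T u 0) + c * \sum_j r 0 j ^+ 2 = 0.
  have := congr1 (fun M : 'rV_n.+1 => (M *m r^T) 0 0) r_ker.
  rewrite mulmxDr mul_mx_scalar mulmxDl -scalemxAl.
  have -> : r *m cross_gram u u *m r^T = cross_gram (lincomb r^T u) (lincomb r^T u).
    by rewrite cross_gram_lincombr cross_gram_lincombl trmxK.
  suff -> : \sum_j r 0 j ^+ 2 = \sum_j r 0 j * r^T j 0 by rewrite mul0mx !mxE.
  by apply: eq_bigr => j _; rewrite [r^T _ _]mxE expr2.
have sq0 : \sum_j r 0 j ^+ 2 = 0.
  have := nsq_ge0 (lincomb r^T u 0); have := c_gt0 isT.
  have : 0 <= \sum_j r 0 j ^+ 2 by apply: sumr_ge0 => j _; apply: sqr_ge0.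
  nra.
apply/rowP => j; rewrite [RHS]mxE; apply/eqP; rewrite -sqrf_eq0; apply/eqP.
by move/psumr_eq0P: sq0 => -> // l _; apply: sqr_ge0.
Qed.

Lemma kernel_mx_cross_gram (X : Type) (k : X -> X -> R) (phi : X -> V) :
  (forall x x', k x x' = inner (phi x) (phi x')) ->
  forall n m (u : 'I_n -> X) (v : 'I_m -> X),
  \matrix_(i, j) k (u i) (v j) = cross_gram (fun i => phi (u i)) (fun j => phi (v j)).
Proof.
by move=> reproducing n m u v; apply/matrixP => i j; rewrite !mxE reproducing.
Qed.

End Gram.

Section Tensor.
Context {R : realType} {H1 H2 T : preHilbertType R}.

Lemma cross_gram_tensor (t : H1 -> H2 -> T) :
  (forall x x' y y', inner (t x y) (t x' y') = inner x x' * inner y y') ->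
  forall n m (f : 'I_n -> H1) (g : 'I_n -> H2) (f' : 'I_m -> H1) (g' : 'I_m -> H2),
  cross_gram (fun i => t (f i) (g i)) (fun j => t (f' j) (g' j))
  = hadamard (cross_gram f f') (cross_gram g g').
Proof. by move=> inner_t n m f g f' g'; apply/matrixP => i j; rewrite !mxE inner_t. Qed.

Lemma tensor_kernel_mx (X1 X2 : Type) (k1 : X1 -> X1 -> R) (k2 : X2 -> X2 -> R)
    (phi1 : X1 -> H1) (phi2 : X2 -> H2) (t : H1 -> H2 -> T) :
  (forall x x', k1 x x' = inner (phi1 x) (phi1 x')) ->
  (forall y y', k2 y y' = inner (phi2 y) (phi2 y')) ->
  (forall x x' y y', inner (t x y) (t x' y') = inner x x' * inner y y') ->
  forall n m (a : 'I_n -> X1) (b : 'I_n -> X2) (a' : 'I_m -> X1) (b' : 'I_m -> X2),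
  hadamard (\matrix_(i, j) k1 (a i) (a' j)) (\matrix_(i, j) k2 (b i) (b' j))
  = cross_gram (fun i => t (phi1 (a i)) (phi2 (b i)))
               (fun j => t (phi1 (a' j)) (phi2 (b' j))).
Proof.
move=> reproducing1 reproducing2 inner_t n m a b a' b'.
by rewrite (kernel_mx_cross_gram reproducing1) (kernel_mx_cross_gram reproducing2)
  -(cross_gram_tensor inner_t).
Qed.

End Tensor.

(* Also valid for [n = 0], where [0%:R^-1 = 0] but the sum is empty. *)
Lemma mulVn_sum {R : numFieldType} n (F : 'I_n -> R) :
  n%:R^-1 * \sum_(i < n) n%:R * F i = \sum_(i < n) F i.
Proof.
case: n F => [|n] F; first by rewrite !big_ord0 mulr0.
by rewrite -mulr_sumr mulKf ?pnatr_eq0.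
Qed.

Section OperatorRidge.
Context {R : realType} {HW HAY HS : preHilbertType R}.
Variables (rk : HW -> HAY -> HS) (app : HS -> HAY -> HW).
Hypothesis app_rk : forall w v u, app (rk w v) u = inner v u *: w.
Hypothesis inner_app : forall C v w, inner (app C v) w = inner C (rk w v).

Lemma appD C D v : app (C + D) v = app C v + app D v.
Proof. by apply: inner_extl => w; rewrite innerDl !inner_app innerDl. Qed.

Lemma app0 v : app 0 v = 0.
Proof. by apply: inner_extl => w; rewrite inner_app !inner0l. Qed.

Lemma app_sum (I : Type) (r : seq I) (P : pred I) (F : I -> HS) v :
  app (\sum_(i <- r | P i) F i) v = \sum_(i <- r | P i) app (F i) v.
Proof. exact: (big_morph (app^~ v) (fun C D => appD C D v) (app0 v)). Qed.

Variables (n : nat) (x : 'I_n -> HAY) (t : 'I_n -> HW) (lam : R).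

Definition op_ridge_risk (C : HS) : R :=
  n%:R^-1 * \sum_(i < n) nsq (t i - app C (x i)) + lam * nsq C.

Definition op_ridge_weights : 'M[R]_n := invmx (cross_gram x x + (n%:R * lam)%:M).

Definition op_ridge_solution : HS :=
  \sum_(j < n) rk (lincomb op_ridge_weights t j) (x j).

Lemma app_op_ridge_solution m (v : 'I_m -> HAY) k :
  app op_ridge_solution (v k) = lincomb (op_ridge_weights *m cross_gram x v) t k.
Proof.
rewrite app_sum -lincomb_mulmx; apply: eq_bigr => j _.
by rewrite app_rk mxE.
Qed.

Hypothesis lam_gt0 : 0 < lam.

Lemma op_ridge_residual k :
  t k - app op_ridge_solution (x k) = (n%:R * lam) *: lincomb op_ridge_weights t k.
Proof.
have reg_unit : cross_gram x x + (n%:R * lam)%:M \in unitmx.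
  by apply: gram_add_scalar_unitmx => n_gt0; rewrite mulr_gt0 ?ltr0n.
rewrite app_op_ridge_solution -lincombZ -{1}(lincomb1 t k) -(mulVmx reg_unit).
by rewrite mulmxDr mul_mx_scalar lincombD addrC addKr.
Qed.

Lemma op_ridge_growth D :
  op_ridge_risk op_ridge_solution + lam * nsq D
  <= op_ridge_risk (op_ridge_solution + D).
Proof.
set C := op_ridge_solution.
have expand i : nsq (t i - app (C + D) (x i)) = nsq (t i - app C (x i))
    - 2 * inner (t i - app C (x i)) (app D (x i)) + nsq (app D (x i)).
  by rewrite appD opprD addrA [LHS]nsqB.
(* By the normal equations the data cross term equals the penalty cross term. *)
have cross : n%:R^-1 * \sum_(i < n) inner (t i - app C (x i)) (app D (x i))
    = lam * inner C D.
  under eq_bigr do rewrite op_ridge_residual innerZl -mulrA.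
  rewrite mulVn_sum -mulr_sumr inner_suml; congr (_ * _).
  by apply: eq_bigr => j _; rewrite innerC inner_app innerC.
have fit_ge0 : 0 <= n%:R^-1 * \sum_(i < n) nsq (app D (x i)).
  by rewrite mulr_ge0 ?invr_ge0 ?ler0n ?sumr_ge0 // => i _; apply: nsq_ge0.
rewrite /op_ridge_risk (eq_bigr _ (fun i _ => expand i)) big_split sumrB /=.
rewrite -mulr_sumr mulrDr mulrBr mulrCA cross nsqD.
lra.
Qed.

Lemma op_ridge_argmin :
  (forall C, op_ridge_risk op_ridge_solution <= op_ridge_risk C) /\
  (forall C, (forall C', op_ridge_risk C <= op_ridge_risk C') -> C = op_ridge_solution).
Proof. exact: quadratic_growth_argmin lam_gt0 op_ridge_growth. Qed.

End OperatorRidge.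

Section Ridge.
Context {R : realType} {V : preHilbertType R}.
Variables (m : nat) (z : 'I_m -> V) (s : 'I_m -> R) (eta : R).

Definition ridge_risk (h : V) : R :=
  m%:R^-1 * \sum_(i < m) (s i - inner h (z i)) ^+ 2 + eta * nsq h.

Definition ridge_weights : 'cV[R]_m :=
  invmx (cross_gram z z + (m%:R * eta)%:M) *m \col_i s i.

Definition ridge_solution : V := lincomb ridge_weights z 0.

Lemma inner_ridge_solution v :
  inner ridge_solution v = (ridge_weights^T *m cross_gram z (fun _ : 'I_1 => v)) 0 0.
Proof. by rewrite -cross_gram_lincombl mxE. Qed.

Hypothesis eta_gt0 : 0 < eta.

Lemma ridge_residual k :
  s k - inner ridge_solution (z k) = m%:R * eta * ridge_weights k 0.
Proof.
have reg_unit : cross_gram z z + (m%:R * eta)%:M \in unitmx.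
  by apply: gram_add_scalar_unitmx => m_gt0; rewrite mulr_gt0 ?ltr0n.
have normal_eq : (cross_gram z z + (m%:R * eta)%:M) *m ridge_weights = \col_i s i.
  by rewrite mulmxA mulmxV ?mul1mx.
have -> : s k = ((cross_gram z z + (m%:R * eta)%:M) *m ridge_weights) k 0.
  by rewrite normal_eq mxE.
have -> : inner ridge_solution (z k) = cross_gram z (lincomb ridge_weights z) k 0.
  by rewrite mxE innerC.
rewrite cross_gram_lincombr mulmxDl mul_scalar_mx [in X in X - _]mxE.
by rewrite addrAC subrr add0r mxE.
Qed.

Lemma ridge_growth d :
  ridge_risk ridge_solution + eta * nsq d <= ridge_risk (ridge_solution + d).
Proof.
set h := ridge_solution.
have expand i : (s i - inner (h + d) (z i)) ^+ 2 = (s i - inner h (z i)) ^+ 2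
    - 2 * ((s i - inner h (z i)) * inner d (z i)) + inner d (z i) ^+ 2.
  by rewrite innerDl; ring.
have cross : m%:R^-1 * \sum_(i < m) (s i - inner h (z i)) * inner d (z i)
    = eta * inner h d.
  under eq_bigr do rewrite ridge_residual -!mulrA.
  rewrite mulVn_sum -mulr_sumr inner_suml; congr (_ * _).
  by apply: eq_bigr => j _; rewrite innerZl (innerC (z j)).
have fit_ge0 : 0 <= m%:R^-1 * \sum_(i < m) inner d (z i) ^+ 2.
  by rewrite mulr_ge0 ?invr_ge0 ?ler0n ?sumr_ge0 // => i _; apply: sqr_ge0.
rewrite /ridge_risk (eq_bigr _ (fun i _ => expand i)) big_split sumrB /=.
rewrite -mulr_sumr mulrDr mulrBr mulrCA cross nsqD.
lra.
Qed.

Lemma ridge_argmin :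
  (forall h, ridge_risk ridge_solution <= ridge_risk h) /\
  (forall h, (forall h', ridge_risk h <= ridge_risk h') -> h = ridge_solution).
Proof. exact: quadratic_growth_argmin eta_gt0 ridge_growth. Qed.

End Ridge.

Unset Implicit Arguments.

Theorem theorem2
  (R : realType) (A W : Type)
  (kA : A -> A -> R) (kW : W -> W -> R) (kY : R -> R -> R)
  (HA HW HY HAW HAY HS : preHilbertType R)
  (phiA : A -> HA) (phiW : W -> HW) (phiY : R -> HY)
  (tAW : HA -> HW -> HAW) (tAY : HA -> HY -> HAY)
  (rk : HW -> HAY -> HS) (app : HS -> HAY -> HW)
  (hA : rkhs_of kA phiA) (hW : rkhs_of kW phiW) (hY : rkhs_of kY phiY)
  (hAW : is_tensor_product tAW) (hAY : is_tensor_product tAY)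
  (hHS : is_HS_space rk app)
  (n m : nat) (w : 'I_n -> W) (a : 'I_n -> A) (y : 'I_n -> R)
  (ad : 'I_m -> A) (yd : 'I_m -> R) (lam eta : R)
  (hlam : 0 < lam) (heta : 0 < eta) :
  let phiAY := fun (a0 : A) (y0 : R) => tAY (phiA a0) (phiY y0) in
  let obj1 := fun C : HS =>
    n%:R^-1 * \sum_(i < n) nsq (phiW (w i) - app C (phiAY (a i) (y i)))
    + lam * nsq C in
  let obj2 := fun (C : HS) (h : HAW) =>
    m%:R^-1 * \sum_(i < m)
       (yd i - inner h (tAW (phiA (ad i)) (app C (phiAY (ad i) (yd i))))) ^+ 2
    + eta * nsq h in
  let KAA := \matrix_(i < n, j < n) kA (a i) (a j) in
  let KWW := \matrix_(i < n, j < n) kW (w i) (w j) in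
  let KYY := \matrix_(i < n, j < n) kY (y i) (y j) in
  let KAdAd := \matrix_(i < m, j < m) kA (ad i) (ad j) in
  let KAAd := \matrix_(i < n, j < m) kA (a i) (ad j) in
  let KYYd := \matrix_(i < n, j < m) kY (y i) (yd j) in
  let B := invmx (hadamard KAA KYY + (n%:R * lam)%:M) *m hadamard KAAd KYYd in
  let M := hadamard KAdAd (B^T *m KWW *m B) in
  let ydv := \col_(i < m) yd i in
  let alpha := invmx (M + (m%:R * eta)%:M) *m ydv in
  let kvec := fun (a0 : A) (w0 : W) =>
    hadamard (\col_(i < m) kA (ad i) a0)
             (B^T *m \col_(i < n) kW (w i) w0) in
  (exists C : HS, forall C' : HS, obj1 C <= obj1 C') /\
  forall Chat : HS, (forall C' : HS, obj1 Chat <= obj1 C') ->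
    (exists h : HAW, forall h' : HAW, obj2 Chat h <= obj2 Chat h') /\
    forall hhat : HAW, (forall h' : HAW, obj2 Chat hhat <= obj2 Chat h') ->
      forall (a0 : A) (w0 : W),
        inner hhat (tAW (phiA a0) (phiW w0)) = (alpha^T *m kvec a0 w0) 0 0.
Proof.
move=> phiAY obj1 obj2 KAA KWW KYY KAdAd KAAd KYYd B M ydv alpha kvec.
case: hHS => _ app_rk inner_app; case: hAW => _ _ inner_tAW; case: hAY => _ _ inner_tAY.
case: hA => _ _ kA_inner _; case: hW => _ _ kW_inner _; case: hY => _ _ kY_inner _.
pose x i := phiAY (a i) (y i); pose xd k := phiAY (ad k) (yd k); pose t i := phiW (w i).
have [Cs_min Cs_unique] := op_ridge_argmin app_rk inner_app x t hlam.
split; first by exists (op_ridge_solution rk x t lam).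
move=> _ /Cs_unique ->; set Cs := op_ridge_solution rk x t lam.
pose u := lincomb B t.
have Cs_xd k : app Cs (xd k) = u k.
  rewrite (app_op_ridge_solution app_rk inner_app) /u /B /KAA /KYY /KAAd /KYYd.
  by rewrite !(tensor_kernel_mx kA_inner kY_inner inner_tAY).
pose z k := tAW (phiA (ad k)) (u k).
have obj2_z h : obj2 Cs h = ridge_risk z yd eta h.
  by rewrite /obj2 /ridge_risk; under eq_bigr do rewrite Cs_xd.
have [h_min h_unique] := ridge_argmin z yd heta.
split=> [|hhat hhat_min a0 w0].
  by exists (ridge_solution z yd eta) => h'; rewrite !obj2_z.
have -> : hhat = ridge_solution z yd eta.
  by apply: h_unique => h'; rewrite -!obj2_z.
have M_z : M = cross_gram z z.
  rewrite /M /KAdAd /KWW (kernel_mx_cross_gram kA_inner) (kernel_mx_cross_gram kW_inner).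
  by rewrite -cross_gram_lincombl -cross_gram_lincombr -(cross_gram_tensor inner_tAW).
have kvec_z : kvec a0 w0 = cross_gram z (fun _ => tAW (phiA a0) (phiW w0)).
  rewrite /kvec (kernel_mx_cross_gram kA_inner) (kernel_mx_cross_gram kW_inner).
  by rewrite -cross_gram_lincombl -(cross_gram_tensor inner_tAW).
by rewrite inner_ridge_solution kvec_z /alpha M_z.
Qed.
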